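(* Let $M_0$ be a primitive hyperbolic $2$-elementary sublattice of $L_{K3}$ and $\widetilde M_0=M_0\oplus\mathbb{Z}e\subset L_2$. Then $\Delta(M_0^{\perp_{L_{K3}}})=\Delta(\widetilde M_0^{\perp_{L_2}})$.
   Context: $L_{K3}=U^{\oplus3}\oplus E_8^{\oplus2}$ (even unimodular, $E_8$ negative definite), $L_2=L_{K3}\oplus\mathbb{Z}e$ with $e^2=-2$, $(e,L_{K3})=0$; note $\widetilde M_0^{\perp_{L_2}}=M_0^{\perp_{L_{K3}}}$. $\Delta(M_0^{\perp_{L_{K3}}})=\{d\in M_0^{\perp}: d^2=-2\}$ and $\Delta(\widetilde M_0^{\perp_{L_2}})=\{\delta\in\widetilde M_0^{\perp}:\ \delta^2=-2,\ \text{or}\ \delta^2=-10\text{ and }(\delta,L_2)=2\mathbb{Z}\}$. *)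

(* Lattices are Z^n ('rV[int]_n) with an explicit integral
   Gram matrix. *)
From HB Require Import structures.
From mathcomp Require Import all_boot all_order all_algebra.
Set Implicit Arguments. Unset Strict Implicit. Unset Printing Implicit Defensive.
Import Order.TTheory GRing.Theory Num.Theory.
Local Open Scope ring_scope.

(* adjacency of the E8 Dynkin diagram, nodes 0..7 (Bourbaki 1..8 shifted):
   edges 1-3, 3-4, 4-5, 5-6, 6-7, 7-8, 2-4 *)
Definition e8_edge (a b : nat) : bool :=
  [|| (a == 0) && (b == 2), (a == 2) && (b == 3), (a == 3) && (b == 4),
      (a == 4) && (b == 5), (a == 5) && (b == 6), (a == 6) && (b == 7)
    | (a == 1) && (b == 3)]%N.

(* the negative definite E8 Gram matrix entry (minus the Cartan matrix) *)
Definition e8_neg (a b : nat) : int :=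
  if (a == b)%N then -2 else if e8_edge a b || e8_edge b a then 1 else 0.

(* Gram entries of L_K3 = U^3 (+) E8(-1)^2, coordinates 0..21:
   0..5 three hyperbolic planes, 6..13 first E8, 14..21 second E8 *)
Definition gramK3_nat (i j : nat) : int :=
  if ((i < 6) && (j < 6))%N then (if ((i./2 == j./2) && (i != j))%N then 1 else 0)
  else if [&& 6 <= i, i < 14, 6 <= j & j < 14]%N then e8_neg (i - 6)%N (j - 6)%N
  else if [&& 14 <= i, i < 22, 14 <= j & j < 22]%N then e8_neg (i - 14)%N (j - 14)%N
  else 0.

(* Gram entries of L_2 = L_K3 (+) Z e, e = coordinate 22, e^2 = -2 *)
Definition gramL2_nat (i j : nat) : int :=
  if ((i == 22) && (j == 22))%N then -2
  else if ((i < 22) && (j < 22))%N then gramK3_nat i j else 0.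

Definition QK3 : 'M[int]_22 := \matrix_(i, j) gramK3_nat i j.
Definition QL2 : 'M[int]_23 := \matrix_(i, j) gramL2_nat i j.

Definition bform {R : comRingType} {n : nat} (Q : 'M[R]_n) (x y : 'rV[R]_n) : R :=
  (x *m Q *m y^T) 0 0.

Definition intQ {m n : nat} (A : 'M[int]_(m, n)) : 'M[rat]_(m, n) :=
  map_mx (fun z : int => z%:~R) A.

(* A sublattice M of Z^n given by a basis: the rows of B : 'M_(r, n),
   assumed linearly independent (row_free over Q). *)
Definition in_lat {r n : nat} (B : 'M[int]_(r, n)) (x : 'rV[int]_n) : Prop :=
  exists c : 'rV[int]_r, x = c *m B.

(* primitive: L/M torsion free *)
Definition primitive_sub {r n : nat} (B : 'M[int]_(r, n)) : Prop :=
  forall (x : 'rV[int]_n) (k : nat), (0 < k)%N -> in_lat B (x *+ k) -> in_lat B x.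

Definition sub_gram {r n : nat} (Q : 'M[int]_n) (B : 'M[int]_(r, n)) : 'M[int]_r :=
  B *m Q *m B^T.

(* hyperbolic: the restricted form has signature (1, rank - 1)
   (nondegenerate, exactly one positive square), by Sylvester diagonalisation *)
Definition hyperbolic_sub {r n : nat} (Q : 'M[int]_n) (B : 'M[int]_(r.+1, n)) : Prop :=
  exists (P : 'M[rat]_r.+1) (d : 'rV[rat]_r.+1),
    P \in unitmx /\ P *m intQ (sub_gram Q B) *m P^T = diag_mx d /\
    0 < d 0 ord0 /\ (forall i : 'I_r.+1, i != ord0 -> d 0 i < 0).

(* dual lattice M^* inside M (x) Q, elements given as vectors of Q^n *)
Definition in_dual {r n : nat} (Q : 'M[int]_n) (B : 'M[int]_(r, n)) (v : 'rV[rat]_n) : Prop :=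
  (exists c : 'rV[rat]_r, v = c *m intQ B) /\
  (forall m : 'rV[int]_n, in_lat B m ->
     exists z : int, bform (intQ Q) v (intQ m) = z%:~R).

(* 2-elementary: the discriminant group M^*/M is killed by 2, i.e. is
   isomorphic to (Z/2)^a for some a *)
Definition two_elementary_sub {r n : nat} (Q : 'M[int]_n) (B : 'M[int]_(r, n)) : Prop :=
  forall v : 'rV[rat]_n, in_dual Q B v ->
    exists m : 'rV[int]_n, in_lat B m /\ v *+ 2 = intQ m.

Definition orth {n : nat} (Q : 'M[int]_n) (S : 'rV[int]_n -> Prop) (x : 'rV[int]_n) : Prop :=
  forall y, S y -> bform Q x y = 0.

Definition DeltaK3 (S : 'rV[int]_22 -> Prop) (d : 'rV[int]_22) : Prop :=
  S d /\ bform QK3 d d = -2.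

Definition div_L2_2 (d : 'rV[int]_23) : Prop :=
  forall k : int, (exists y : 'rV[int]_23, bform QL2 d y = k) <-> (2 %| k)%Z.

Definition DeltaL2 (S : 'rV[int]_23 -> Prop) (d : 'rV[int]_23) : Prop :=
  S d /\ (bform QL2 d d = -2 \/ (bform QL2 d d = -10 /\ div_L2_2 d)).

Definition incl (x : 'rV[int]_22) : 'rV[int]_23 :=
  \row_(j < 23) (if (j < 22)%N =P true is ReflectT h then x 0 (Ordinal h) else 0).

Definition e_vec : 'rV[int]_23 := \row_(j < 23) (if (j == 22 :> nat) then 1 else 0).

Definition tildeM {r : nat} (B : 'M[int]_(r, 22)) (y : 'rV[int]_23) : Prop :=
  exists (m : 'rV[int]_22) (k : int), in_lat B m /\ y = incl m + e_vec *~ k.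

From HB Require Import structures.
From mathcomp Require Import all_boot all_order all_algebra zify.
Import GRing.Theory.
Local Open Scope ring_scope.

(* Orthogonality to e kills the last coordinate, so the complement of
   M0 (+) Ze in L_2 is the complement of M0 in L_K3.  A vector d of L_K3 with
   (d, L_2) = 2Z pairs evenly with all of L_K3; as L_K3 is unimodular its Gram
   matrix is invertible mod 2, hence d = 2d' and d^2 = 4d'^2 cannot be -10.
   No property of M0 beyond being a sublattice is used. *)

Section BilinearForm.
Variables (R : comNzRingType) (n : nat) (Q : 'M[R]_n).
Implicit Types x y z : 'rV[R]_n.

Lemma bform0r x : bform Q x 0 = 0.
Proof. by rewrite /bform linear0 mulmx0 mxE. Qed.

Lemma bformDr x y z : bform Q x (y + z) = bform Q x y + bform Q x z.
Proof. by rewrite /bform linearD mulmxDr mxE. Qed.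

Lemma bformMnl x y k : bform Q (x *+ k) y = bform Q x y *+ k.
Proof. by rewrite /bform -!mulmxA -[_ *m _]/(mulmxr _ _) raddfMn mulmxnE. Qed.

Lemma bformMnr x y k : bform Q x (y *+ k) = bform Q x y *+ k.
Proof. by rewrite /bform !raddfMn /= mulmxnE. Qed.

Lemma bformMzr x y k : bform Q x (y *~ k) = bform Q x y *~ k.
Proof. by rewrite /bform !raddfMz /= -scaler_int mxE mulrzl. Qed.

Lemma bform_delta x j : bform Q x (delta_mx 0 j) = (x *m Q) 0 j.
Proof. by rewrite /bform trmx_delta -colE mxE. Qed.

End BilinearForm.

Lemma bform_scalar1 (R : comNzRingType) (c : R) (a b : 'rV[R]_1) :
  bform c%:M a b = c * a 0 0 * b 0 0.
Proof.
by rewrite /bform !mxE !big_ord1 !mxE big_ord1 !mxE mulr1n [a 0 0 * c]mulrC.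
Qed.

Lemma bform_block_diag (R : comNzRingType) (n1 n2 : nat)
    (Q1 : 'M[R]_n1) (Q2 : 'M[R]_n2) x1 x2 y1 y2 :
  bform (block_mx Q1 0 0 Q2) (row_mx x1 x2) (row_mx y1 y2) =
  bform Q1 x1 y1 + bform Q2 x2 y2.
Proof.
by rewrite /bform mul_row_block !mulmx0 addr0 add0r tr_row_mx mul_row_col mxE.
Qed.

Lemma QL2_block : QL2 = block_mx QK3 0 0 (-2)%:M :> 'M_(22 + 1).
Proof.
apply/matrixP => i j; case: (split_ordP i) => i' ->; case: (split_ordP j) => j' ->.
all: rewrite ?block_mxEul ?block_mxEur ?block_mxEdl ?block_mxEdr !mxE /gramL2_nat /=.
- have lt_i := ltn_ord i'; have lt_j := ltn_ord j'.
  by rewrite lt_i lt_j (ltn_eqF lt_i).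
- by rewrite [j']ord1 (ltn_eqF (ltn_ord i')) ltnn andbF.
- by rewrite [i']ord1 (ltn_eqF (ltn_ord j')) andbF.
- by rewrite [i']ord1 [j']ord1.
Qed.

Lemma incl_row_mx x : incl x = row_mx x 0 :> 'rV_(22 + 1).
Proof.
apply/rowP => j; case: (split_ordP j) => j' ->; rewrite ?row_mxEl ?row_mxEr !mxE /=.
- case: (_ =P _) => [lt_j|]; last by case; exact: ltn_ord.
  by congr (x _ _); apply: val_inj.
- by rewrite [j']ord1; case: (_ =P _).
Qed.

Lemma e_vec_row_mx : e_vec = row_mx 0 1 :> 'rV_(22 + 1).
Proof.
apply/rowP => j; case: (split_ordP j) => j' ->; rewrite ?row_mxEl ?row_mxEr !mxE /=.
  by rewrite (ltn_eqF (ltn_ord j')).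
by rewrite [j']ord1.
Qed.

Lemma bformL2_row_mx (x y : 'rV[int]_22) (a b : 'rV[int]_1) :
  bform QL2 (row_mx x a) (row_mx y b) = bform QK3 x y - 2 * a 0 0 * b 0 0.
Proof.
by rewrite QL2_block (@bform_block_diag _ 22 1) bform_scalar1 mulNr mulNr.
Qed.

Lemma bform_incl x y : bform QL2 (incl x) (incl y) = bform QK3 x y.
Proof. by rewrite !incl_row_mx bformL2_row_mx mxE !mulr0 subr0. Qed.

Lemma bform_incl_e_vec x : bform QL2 (incl x) e_vec = 0.
Proof.
by rewrite incl_row_mx e_vec_row_mx bformL2_row_mx bform0r mxE mulr0 mul0r subr0.
Qed.

Lemma orth_tildeM r (B : 'M[int]_(r, 22)) delta :
  orth QL2 (tildeM B) delta <-> exists d, orth QK3 (in_lat B) d /\ delta = incl d.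
Proof.
split=> [orth_delta | [d [orth_d ->]] _ [m [k [Mm ->]]]]; last first.
  by rewrite bformDr bformMzr bform_incl_e_vec bform_incl orth_d // mul0rz addr0.
have lat0 : in_lat B 0 by exists 0; rewrite mul0mx.
have incl0 : incl 0 = 0 by rewrite incl_row_mx row_mx0.
have [d [a delta_da]] : exists d a, delta = row_mx d a :> 'rV_(22 + 1).
  by exists (lsubmx (delta : 'rV_(22 + 1))), (rsubmx (delta : 'rV_(22 + 1)));
    rewrite hsubmxK.
subst delta.
have a0 : a = 0.
  have /orth_delta : tildeM B e_vec by exists 0, 1; rewrite incl0 add0r.
  rewrite e_vec_row_mx bformL2_row_mx bform0r [(1 : 'M_1) 0 0]mxE mulr1n mulr1 add0r.
  move=> /eqP; rewrite oppr_eq0 mulf_eq0 /= => /eqP a00.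
  by apply/rowP => i; rewrite ord1 a00 mxE.
exists d; split; last by rewrite a0 incl_row_mx.
move=> m Mm; have /orth_delta : tildeM B (incl m) by exists m, 0; rewrite mulr0z addr0.
by rewrite a0 incl_row_mx bformL2_row_mx mxE !mul0r subr0.
Qed.

(* Expanding one column at a time: simplifying all 22 sums in a single goal
   is several times slower. *)
Ltac expand_gramK3_columns even_col j :=
  lazymatch j with
  | 22%N => idtac
  | _ => let e := fresh "e" in
         have e := even_col j isT;
         rewrite /index_iota /= !big_cons big_nil /gramK3_nat /e8_neg /e8_edge /=
           !mulr0 !addr0 ?add0r ?mulr1 in e;
         expand_gramK3_columns even_col (S j)
  end.

Lemma gramK3_nondegenerate_mod2 (f : nat -> int) :
  (forall j, (j < 22)%N -> (2 %| \sum_(0 <= k < 22) f k * gramK3_nat k j)%Z) ->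
  forall i, (i < 22)%N -> (2 %| f i)%Z.
Proof.
move=> even_col; expand_gramK3_columns even_col 0%N; clear even_col.
by move=> i lt_i; do 22 (case: i lt_i => [|i] lt_i; first lia).
Qed.

Lemma QK3_even_pairing_double (d : 'rV[int]_22) :
  (forall y, (2 %| bform QK3 d y)%Z) -> exists d', d = d' *+ 2.
Proof.
move=> even_d.
have even_coord i : (2 %| d 0%R i)%Z.
  rewrite -[i]inord_val.
  apply: (@gramK3_nondegenerate_mod2 (fun k => d 0%R (inord k)) _ i (ltn_ord i)).
  move=> j lt_j.
  have := even_d (delta_mx 0 (inord j)); rewrite bform_delta mxE big_mkord.
  by under eq_bigr => k _ do rewrite mxE inordK // -[k in d _ k]inord_val.
exists (\row_i (d 0%R i %/ 2)%Z); apply/rowP => i.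
by rewrite mulmxnE mxE; have := divzK (even_coord i); lia.
Qed.

Lemma dvd4_norm_of_div_L2_2_incl (d : 'rV[int]_22) :
  div_L2_2 (incl d) -> (4 %| bform QK3 d d)%Z.
Proof.
move=> even_incl_d.
have [d' ->] : exists d', d = d' *+ 2.
  apply: QK3_even_pairing_double => y.
  by apply: (even_incl_d _).1; exists (incl y); rewrite bform_incl.
rewrite bformMnl bformMnr; lia.
Qed.

Theorem lemma4p2 (r : nat) (B : 'M[int]_(r.+1, 22)) :
  row_free (intQ B) ->
  primitive_sub B ->
  hyperbolic_sub QK3 B ->
  two_elementary_sub QK3 B ->
  forall delta : 'rV[int]_23,
    DeltaL2 (orth QL2 (tildeM B)) delta <->
    exists d : 'rV[int]_22, DeltaK3 (orth QK3 (in_lat B)) d /\ delta = incl d.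
Proof.
move=> _ _ _ _ delta; rewrite /DeltaL2 orth_tildeM; split.
- move=> [[d [orth_d ->]]]; rewrite bform_incl => norm_d.
  exists d; split => //; split => //.
  by case: norm_d => [// | [norm10 /dvd4_norm_of_div_L2_2_incl]]; rewrite norm10.
- move=> [d [[orth_d norm_d] ->]]; split; first by exists d.
  by left; rewrite bform_incl.
Qed.
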